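(* Let $m,n$ be positive integers and let $s:\mathbb{R}\to\mathbb{R}$ be a spline of degree $m$ whose knots are exactly $\alpha_0<\alpha_1<\dots<\alpha_n$. Suppose that $\alpha_0$ and $\alpha_n$ are $s$-separated zeros of $s$ of order $\geq m$, i.e. $s$ is non-constant on $[\alpha_0,\alpha_n]$ and $s^{(j)}(\alpha_0)=s^{(j)}(\alpha_n)=0$ for all $j=0,1,\dots,m-1$. Then (i) $n\geq m+1$, and (ii) $s$ has at most $n-m-1$ separated zeros in the open interval $]\alpha_0,\alpha_n[$.
   Context: A spline of degree $m$ (with finitely many knots) is a function $s\in C^{m-1}(\mathbb{R},\mathbb{R})$ for which there are finitely many points such that on each interval between consecutive such points, and on the two unbounded complementary intervals, $s$ coincides with a polynomial of degree at most $m$. The knots of $s$ are the points at which $s$ is not $C^\infty$ (in any neighbourhood); the intervals between consecutive knots are the polynomiality domains. For a function $f$ and reals $a<b$, the points $a,b$ are $f$-separated if $f$ is non-constant on $[a,b]$; a strictly increasing finite family of points is $f$-separated if every two consecutive points are $f$-separated. ''$s$ has at most $k$ separated zeros in a set $I$'' means that every $s$-separated family of zeros of $s$ contained in $I$ has at most $k$ elements. The order of a zero $z$ of $f\in C^{m-1}$ is $\min(\{j\in\{0,\dots,m-1\}: f^{(j)}(z)\neq 0\}\cup\{m\})$. *)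

From HB Require Import structures.
From mathcomp Require Import all_boot all_order all_algebra.
From mathcomp Require Import all_classical all_reals all_analysis.
Set Implicit Arguments. Unset Strict Implicit. Unset Printing Implicit Defensive.
Import Order.TTheory GRing.Theory Num.Theory.
Import numFieldNormedType.Exports.
Local Open Scope ring_scope.
Local Open Scope classical_set_scope.

Section Splines.
Variable R : realType.

Definition is_Ck (k : nat) (f : R -> R) : Prop :=
  (forall j, (j < k)%N -> forall x : R, derivable (derive1n j f) x 1) /\
  continuous (derive1n k f).

Definition poly_on (m : nat) (f : R -> R) (A : set R) : Prop :=
  exists p : {poly R}, (size p <= m.+1)%N /\ forall x, A x -> f x = p.[x].

(* the i-th piece (0 <= i <= size xs) determined by the strictly increasing points xs:
   ]-oo, xs_0[, ]xs_0, xs_1[, ..., ]xs_(k-1), +oo[ *)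
Definition piece (xs : seq R) (i : nat) : set R :=
  [set x | (i == 0%N) || (nth 0 xs i.-1 < x)] `&`
  [set x | (i == size xs) || (x < nth 0 xs i)].

(* spline of degree m (with finitely many knots), m >= 1 assumed separately *)
Definition is_spline (m : nat) (s : R -> R) : Prop :=
  is_Ck m.-1 s /\
  exists xs : seq R, sorted <%R xs /\
    forall i, (i <= size xs)%N -> poly_on m s (piece xs i).

Definition smooth_on (s : R -> R) (U : set R) : Prop :=
  forall k, forall y, U y -> derivable (derive1n k s) y 1.

Definition is_knot (s : R -> R) (x : R) : Prop :=
  ~ exists e : R, 0 < e /\ smooth_on s (ball x e).

Definition f_separated (f : R -> R) (a b : R) : Prop :=
  a < b /\ exists x y, x \in `[a, b] /\ y \in `[a, b] /\ f x != f y.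

Definition sep_zero_family (s : R -> R) (I : set R) (z : seq R) : Prop :=
  (forall i, (i < size z)%N -> I (nth 0 z i) /\ s (nth 0 z i) = 0) /\
  (forall i, (i.+1 < size z)%N -> f_separated s (nth 0 z i) (nth 0 z i.+1)).

Definition at_most_sep_zeros (s : R -> R) (k : nat) (I : set R) : Prop :=
  forall z : seq R, sep_zero_family s I z -> (size z <= k)%N.

End Splines.

From HB Require Import structures.
From mathcomp Require Import all_boot all_order all_algebra.
From mathcomp Require Import all_classical all_reals all_analysis.
From mathcomp Require Import lra zify.
Import Order.TTheory GRing.Theory Num.Theory.
Import numFieldNormedType.Exports.
Local Open Scope ring_scope.
Local Open Scope classical_set_scope.

(* Read a spline of degree m with knots a_0 < ... < a_n as a C^(m-1) function f with
   f^(m+1) = 0 between knots.  If f has a zero of order m at a_0 and a_n, then a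
   separated family of w >= 2 zeros of f in [a_0, a_n] satisfies w + m <= n + 1: for
   m = 1 two consecutive separated zeros never lie in one linear piece, and for m >= 2
   Rolle's theorem between consecutive zeros, together with the zeros of f' at a_0 and
   a_n, yields w + 1 separated zeros of f', a spline of degree m - 1.
   Interior zeros are counted by adding a_0 and a_n to the family; these are separated
   from every interior zero unless f vanishes on a whole end piece, and then that piece
   is removed and the bound follows by induction on n. *)

Set Implicit Arguments. Unset Strict Implicit.

Section RealFunctions.
Variable R : realType.
Implicit Types (f g : R -> R) (a b p q u v x y : R).

Lemma in_itvooE p q y : (y \in `]p, q[%R) = (p < y < q).
Proof. by rewrite in_itv. Qed.

Lemma derive1_eq_itvoo f g a b :
  {in `]a, b[%R, f =1 g} -> {in `]a, b[%R, derive1 f =1 derive1 g}.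
Proof.
move=> fg x xab; rewrite !derive1E; apply: near_eq_derive.
by apply: filterS (near_in_itvoo xab) => z; exact: fg.
Qed.

Lemma derive1n_eq_itvoo f g a b k :
  {in `]a, b[%R, f =1 g} -> {in `]a, b[%R, derive1n k f =1 derive1n k g}.
Proof.
move=> fg; elim: k => [|k IH] x xab; first exact: fg.
by rewrite !derive1nS; exact: derive1_eq_itvoo IH x xab.
Qed.

Lemma derive1n_cst0 k : derive1n k (fun=> 0 : R) = fun=> 0.
Proof.
elim: k => [//|k IH]; rewrite derive1nS IH; apply/funext => t.
exact: (derive1_cst (0 : R^o) t).
Qed.

Lemma derive1n_horner (P : {poly R}) k : derive1n k (horner P) = horner (derivn k P).
Proof.
elim: k => [|k IH]; first by rewrite derive1n0 derivn0.
by rewrite derive1nS IH derivnS derivE.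
Qed.

Lemma derivable1_continuous f x : derivable f x 1 -> {for x, continuous f}.
Proof. by move=> df; apply/differentiable_continuous; rewrite -derivable1_diffP. Qed.

Lemma derive1_eq0_cst f a b : a <= b -> {within `[a, b], continuous f} ->
  (forall x, a < x < b -> derivable f x 1 /\ derive1 f x = 0) -> f b = f a.
Proof.
rewrite le_eqVlt => /orP[/eqP -> //|ab] cf df.
have df' z : z \in `]a, b[%R -> is_derive z 1 f (derive1 f z).
  by rewrite in_itvooE => /df[dfz _]; rewrite derive1E; exact: derivableP.
have [c /[!in_itvooE] /df[_ ->] E] := MVT ab df' cf.
by apply/eqP; rewrite -subr_eq0 E mul0r.
Qed.

Lemma derive1_eq0_cst_itvoo f p q :
  (forall y, p < y < q -> derivable f y 1 /\ derive1 f y = 0) ->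
  {in `]p, q[%R &, forall x y, f x = f y}.
Proof.
move=> df; suff le_cst x y : p < x < q -> p < y < q -> x <= y -> f x = f y.
  move=> x y /[!in_itvooE] xi yi; have [xy|/ltW yx] := leP x y; first exact: le_cst.
  by apply/esym/le_cst.
move=> /andP[px xq] /andP[py yq] xy; apply/esym/derive1_eq0_cst => //.
  apply: derivable_within_continuous => t /[!in_itv] /= /andP[xt ty].
  by apply: (df t _).1; apply/andP; split; lra.
by move=> t /andP[xt ty]; apply: df; apply/andP; split; lra.
Qed.

Lemma continuous_eq0_right g y b : {for y, continuous g} -> y < b ->
  (forall z, y < z < b -> g z = 0) -> g y = 0.
Proof.
move=> cg yb g0; apply/eqP; apply: contraT => gy0.
have gy_gt0 : 0 < `|g y| by rewrite normr_gt0.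
have near_gy : \forall t \near y^'+, `|g y - g t| < `|g y|.
  by apply: cvgr_dist_lt => //; exact: cvg_at_right_filter.
have [t [[yt tb] +]] :=
  filter_ex (filterI (filterI (nbhs_right_gt y) (nbhs_right_lt yb)) near_gy).
by rewrite (g0 t) ?yt ?tb // subr0 ltxx.
Qed.

Lemma continuous_eq0_left g a y : {for y, continuous g} -> a < y ->
  (forall z, a < z < y -> g z = 0) -> g y = 0.
Proof.
move=> cg ay g0; apply/eqP; apply: contraT => gy0.
have gy_gt0 : 0 < `|g y| by rewrite normr_gt0.
have near_gy : \forall t \near y^'-, `|g y - g t| < `|g y|.
  by apply: cvgr_dist_lt => //; exact: cvg_at_left_filter.
have [t [[az zy] +]] :=
  filter_ex (filterI (filterI (nbhs_left_gt ay) (nbhs_left_lt y)) near_gy).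
by rewrite (g0 t) ?az ?zy // subr0 ltxx.
Qed.

Lemma derive1n_eq0_itvoo_ends g p q j : p < q -> (forall y, p < y < q -> g y = 0) ->
  continuous (derive1n j g) -> derive1n j g p = 0 /\ derive1n j g q = 0.
Proof.
move=> pq g0 cg.
have dg0 y : p < y < q -> derive1n j g y = 0.
  move=> ypq; rewrite (@derive1n_eq_itvoo g (fun=> 0) p q j) ?in_itvooE //.
    by rewrite derive1n_cst0.
split; first exact: continuous_eq0_right (cg p) pq dg0.
exact: continuous_eq0_left (cg q) pq dg0.
Qed.

Lemma rolle_extremum f u v : u < v -> {within `[u, v], continuous f} ->
  (forall x, u < x < v -> derivable f x 1) -> f u = 0 -> f v = 0 ->
  (exists2 x, u <= x <= v & f x != 0) ->
  exists t, [/\ u < t < v, f t != 0 & derive1 f t = 0].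
Proof.
move=> uv cf df fu fv [x xuv fx].
have df' t : t \in `]u, v[%R -> derivable f t 1 by rewrite in_itvooE; exact: df.
have inner t : t \in `[u, v]%R -> f t != 0 -> t \in `]u, v[%R.
  rewrite !in_itv /= !le_eqVlt => /andP[/orP[/eqP<-|->] /orP[/eqP->|->]] //;
    by rewrite ?fu ?fv eqxx.
have oo_cc t : t \in `]u, v[%R -> t \in `[u, v]%R.
  by rewrite !in_itv /= => /andP[? ?]; rewrite !ltW.
have xuv' : x \in `[u, v]%R by rewrite in_itv.
have [M Muv fM] := EVT_max (ltW uv) cf; have [m muv fm] := EVT_min (ltW uv) cf.
have [fM_gt0|fM_le0] := ltP 0 (f M).
  have Muv' := inner M Muv (negbT (gt_eqF fM_gt0)).
  exists M; split; [by rewrite -in_itvooE|by rewrite gt_eqF|].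
  rewrite derive1E; apply: derive_val.
  by apply: derive1_at_max (ltW uv) df' Muv' _ => t /oo_cc /fM.
have [fm_lt0|fm_ge0] := ltP (f m) 0.
  have muv' := inner m muv (negbT (lt_eqF fm_lt0)).
  exists m; split; [by rewrite -in_itvooE|by rewrite lt_eqF|].
  rewrite derive1E; apply: derive_val.
  by apply: derive1_at_min (ltW uv) df' muv' _ => t /oo_cc /fm.
by move: fx; rewrite eq_le (le_trans (fM x xuv') fM_le0) (le_trans fm_ge0 (fm x xuv')).
Qed.

Lemma derive1n_eq0_unique_continuation k g p q c1 c2 :
  (forall y, p < y < q -> forall j, derivable (derive1n j g) y 1) ->
  (forall y, p < y < q -> derive1n k g y = 0) ->
  p <= c1 -> c1 < c2 -> c2 <= q ->
  (forall y, c1 < y < c2 -> g y = 0) -> forall y, p < y < q -> g y = 0.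
Proof.
elim: k g => [|k IH] g dg gk pc1 c12 c2q g0 y ypq; first exact: gk.
have dg' : forall t, p < t < q -> derive1 g t = 0.
  apply: IH => //.
  - by move=> t tpq j; rewrite -derive1Sn; exact: dg.
  - by move=> t tpq; rewrite -derive1Sn; exact: gk.
  move=> t tc; rewrite (@derive1_eq_itvoo g (fun=> 0) c1 c2) ?in_itvooE //.
  exact: (derive1_cst (0 : R^o) t).
have mid : c1 < (c1 + c2) / 2 < c2 by apply/andP; split; lra.
rewrite -(g0 _ mid); apply: (@derive1_eq0_cst_itvoo g p q); rewrite ?in_itvooE //.
- by move=> t tpq; split; [exact: (dg t tpq 0%N)|exact: dg'].
- by move: mid => /andP[? ?]; apply/andP; split; lra.
Qed.

End RealFunctions.

Section SeparatedZeros.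
Variable R : realType.
Implicit Types (f : R -> R) (I J : set R) (u v x y w : R) (z : seq R).

Lemma f_separated_nonzero f u v :
  f_separated f u v -> exists2 t, u <= t <= v & f t != 0.
Proof.
move=> [_ [x [y [+ [+ fxy]]]]]; rewrite !in_setE /= !in_itv /= => xuv yuv.
have [fx0|] := eqVneq (f x) 0; last by exists x.
by exists y => //; rewrite -fx0 eq_sym.
Qed.

Lemma f_separated_not_eq0 f u v : f_separated f u v -> ~ (forall x, u <= x <= v -> f x = 0).
Proof. by move=> /f_separated_nonzero[t tuv /eqP ft] f0; apply/ft/f0. Qed.

Lemma not_f_separated_eq0 f u v w : u < v -> ~ f_separated f u v ->
  u <= w <= v -> f w = 0 -> forall x, u <= x <= v -> f x = 0.
Proof.
move=> uv nsep wuv fw x xuv; have [//|fx] := eqVneq (f x) 0; exfalso; apply: nsep.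
split => //; exists x, w; rewrite !in_setE /= !in_itv /= xuv wuv fw.
by do 2 split.
Qed.

Lemma f_separated_trans f x y w :
  f_separated f x y -> f_separated f y w -> f_separated f x w.
Proof.
move=> [xy [s [t [s_in [t_in fst]]]]] [yw _]; split; first exact: lt_trans yw.
exists s, t; move: s_in t_in; rewrite !in_setE /= !in_itv /= => /andP[? ?] /andP[? ?].
by split; [|split] => //; apply/andP; split; lra.
Qed.

Lemma f_separated_shrinkl f u c v : f_separated f u v -> u <= c -> c < v ->
  (forall x, u <= x <= c -> f x = 0) -> f_separated f c v.
Proof.
move=> /f_separated_nonzero[t /andP[ut tv] ft] uc cv f0.
have ct : c < t by rewrite ltNge; apply: contraNN ft => tc; rewrite f0 ?ut.
split => //; exists t, c; rewrite !in_setE /= !in_itv /= (ltW ct) tv lexx (ltW cv).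
by rewrite (f0 c) ?uc ?lexx //; do 2 split.
Qed.

Lemma f_separated_shrinkr f u c v : f_separated f u v -> u < c -> c <= v ->
  (forall x, c <= x <= v -> f x = 0) -> f_separated f u c.
Proof.
move=> /f_separated_nonzero[t /andP[ut tv] ft] uc cv f0.
have tc : t < c by rewrite ltNge; apply: contraNN ft => ct; rewrite f0 ?ct.
split => //; exists t, c; rewrite !in_setE /= !in_itv /= (ltW tc) ut lexx (ltW uc).
by rewrite (f0 c) ?cv ?lexx //; do 2 split.
Qed.

Lemma f_separated_derive1 f u v x y : (forall t, derivable f t 1) -> u < v ->
  derive1 f u = 0 -> u <= x <= v -> u <= y <= v -> f x = 0 -> f y != 0 ->
  f_separated (derive1 f) u v.
Proof.
move=> df uv df0 xuv yuv fx fy; apply: contrapT => nsep.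
have uuv : u <= u <= v by rewrite lexx ltW.
have df'0 := not_f_separated_eq0 uv nsep uuv df0.
have cst t : u <= t <= v -> f t = f u.
  move=> /andP[ut tv]; apply: derive1_eq0_cst => //.
    by apply: derivable_within_continuous => s _; exact: df.
  by move=> s /andP[us st]; split => //; apply: df'0; apply/andP; split; lra.
by move: fy; rewrite (cst y yuv) -(cst x xuv) fx eqxx.
Qed.

Definition separatedb f : rel R := fun x y => `[< f_separated f x y >].

Lemma separatedb_trans f : transitive (separatedb f).
Proof.
by move=> y x w /asboolP sxy /asboolP syw; apply/asboolP; exact: f_separated_trans sxy syw.
Qed.

Lemma sep_zero_familyP f I z : sep_zero_family f I z <->
  {in z, forall x, I x /\ f x = 0} /\ sorted (separatedb f) z.
Proof.
split=> [[zI zsep]|[zI /(sortedP 0) zsep]].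
  split; first by move=> x /(nthP 0)[i iz <-]; exact: zI.
  by apply/(sortedP 0) => i iz; apply/asboolP; exact: zsep.
split; first by move=> i iz; apply: zI; exact: mem_nth.
by move=> i iz; apply/asboolP; exact: zsep.
Qed.

Lemma sep_zero_family_mem f I z x : sep_zero_family f I z -> x \in z -> I x /\ f x = 0.
Proof. by move=> /sep_zero_familyP[zI _]; exact: zI. Qed.

Lemma sep_zero_family_cons2 f I x y l : sep_zero_family f I [:: x, y & l] <->
  [/\ I x /\ f x = 0, f_separated f x y & sep_zero_family f I (y :: l)].
Proof.
split=> [/sep_zero_familyP[zI /= /andP[/asboolP sxy syl]]|[x0 sxy /sep_zero_familyP[zI syl]]].
  split=> //; first by apply: zI; exact: mem_head.
  by apply/sep_zero_familyP; split=> // w wyl; apply: zI; rewrite in_cons wyl orbT.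
apply/sep_zero_familyP; split; last by apply/andP; split => //; apply/asboolP.
by move=> w; rewrite in_cons => /orP[/eqP->//|]; exact: zI.
Qed.

Lemma sep_zero_family_filter f I J (P : pred R) z : sep_zero_family f I z ->
  {in z, forall x, P x -> J x} -> sep_zero_family f J [seq x <- z | P x].
Proof.
move=> /sep_zero_familyP[zI zsep] PJ; apply/sep_zero_familyP; split.
  by move=> x /[!mem_filter] /andP[Px xz]; split; [exact: PJ|exact: (zI x xz).2].
rewrite sorted_pairwise; last exact: separatedb_trans.
by apply: pairwise_filter; rewrite -sorted_pairwise //; exact: separatedb_trans.
Qed.

Lemma sep_zero_family_count_flat f I (P : pred R) z u v : sep_zero_family f I z ->
  (forall x, u <= x <= v -> f x = 0) -> {in z, forall x, P x -> u <= x <= v} ->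
  (count P z <= 1)%N.
Proof.
move=> zfam f0 Puv; rewrite -size_filter.
have := sep_zero_family_filter (J := [set x | u <= x <= v]) zfam Puv.
case: [seq x <- z | P x] => [|x [|y l]] //.
move=> /sep_zero_family_cons2[[/= /andP[ux xv] _] sxy /sep_zero_familyP[yl _]].
have /andP[uy yv] := (yl y (mem_head _ _)).1.
by case: (f_separated_not_eq0 sxy) => t /andP[xt ty]; apply: f0; apply/andP; split; lra.
Qed.

Lemma sep_zero_family_extend f p q z : sep_zero_family f `]p, q[ z ->
  f p = 0 -> f q = 0 -> f_separated f p q ->
  {in z, forall x, f_separated f p x /\ f_separated f x q} ->
  sep_zero_family f `[p, q] (p :: rcons z q).
Proof.
move=> /sep_zero_familyP[zI zsep] fp fq spq sz; apply/sep_zero_familyP; split.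
  have pq := spq.1; move=> x; rewrite in_cons mem_rcons in_cons.
  case/or3P=> [/eqP->|/eqP->|xz]; [by rewrite /= in_itv /= lexx ltW..|].
  have [+ ->] := zI x xz; rewrite /= !in_itv /= => /andP[px xq].
  by rewrite !ltW.
rewrite sorted_pairwise; last exact: separatedb_trans.
rewrite pairwise_cons pairwise_rcons all_rcons -sorted_pairwise ?zsep; last exact: separatedb_trans.
rewrite andbT -andbA; apply/and3P; split; first exact/asboolP.
  by apply/allP => x xz; apply/asboolP; exact: (sz x xz).1.
by apply/allP => x xz; apply/asboolP; exact: (sz x xz).2.
Qed.

End SeparatedZeros.

Section FlatSplines.
Variable R : realType.
Implicit Types (f : R -> R) (a : nat -> R) (u x y : R) (l z : seq R).

(* A spline of degree m with knots a_0 < ... < a_n and zeros of order m at a_0 and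
   a_n; its polynomial pieces are encoded by f^(m+1) = 0 between knots. *)
Record flat_spline (m n : nat) f a : Prop := {
  fs_n_gt0 : (0 < n)%N;
  fs_incr : forall i j, (i < j)%N -> (j <= n)%N -> a i < a j;
  fs_derivable : forall j, (j.+1 < m)%N -> forall x, derivable (derive1n j f) x 1;
  fs_continuous : forall j, (j < m)%N -> continuous (derive1n j f);
  fs_piece : forall i, (i < n)%N -> forall y, a i < y < a i.+1 ->
    (forall k, derivable (derive1n k f) y 1) /\ derive1n m.+1 f y = 0;
  fs_ends : forall j, (j < m)%N -> derive1n j f (a 0%N) = 0 /\ derive1n j f (a n) = 0 }.

Lemma flat_spline_derive1 m n f a :
  flat_spline m.+2 n f a -> flat_spline m.+1 n (derive1 f) a.
Proof.
case=> n0 incr der cont piece ends; split => //.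
- by move=> j jm x; rewrite -derive1Sn; exact: der.
- by move=> j jm; rewrite -derive1Sn; exact: cont.
- by move=> i ilt y yi; have [dy d0] := piece i ilt y yi; split => [k|]; rewrite -derive1Sn.
- by move=> j jm; rewrite -!derive1Sn; exact: ends.
Qed.

Lemma flat_spline_shift m n f a : flat_spline m n.+2 f a ->
  (forall j, (j < m)%N -> derive1n j f (a 1%N) = 0) -> flat_spline m n.+1 f (fun i => a i.+1).
Proof.
case=> n0 incr der cont piece ends ends1; split => //.
- by move=> i j ij jn; exact: incr.
- by move=> i ilt; exact: piece.
- by move=> j jm; split; [exact: ends1|exact: (ends j jm).2].
Qed.

Lemma flat_spline_drop m n f a : flat_spline m n.+2 f a ->
  (forall j, (j < m)%N -> derive1n j f (a n.+1) = 0) -> flat_spline m n.+1 f a.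
Proof.
case=> n0 incr der cont piece ends endsn; split => //.
- by move=> i j ij jn; apply: incr ij _; exact: leqW.
- by move=> i ilt; apply: piece; exact: leqW.
- by move=> j jm; split; [exact: (ends j jm).1|exact: endsn].
Qed.

Lemma flat_spline_flat_piece m n f a i c1 c2 : flat_spline m.+1 n f a -> (i < n)%N ->
  a i <= c1 -> c1 < c2 -> c2 <= a i.+1 -> (forall y, c1 < y < c2 -> f y = 0) ->
  forall y, a i <= y <= a i.+1 -> f y = 0.
Proof.
move=> fs ilt aic1 c12 c2ai f0.
have f0_piece : forall y, a i < y < a i.+1 -> f y = 0.
  apply: (@derive1n_eq0_unique_continuation _ m.+2 f (a i) (a i.+1) c1 c2) => //.
  - by move=> y yi; have [+ _] := fs_piece fs ilt yi.
  - by move=> y yi; have [_ +] := fs_piece fs ilt yi.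
have cf := fs_continuous fs (ltn0Sn m).
have ai := fs_incr fs (ltnSn i) ilt.
move=> y /andP[aiy yai].
have [<-|aiy'] := eqVneq (a i) y; first exact: continuous_eq0_right (cf _) ai f0_piece.
have [->|yai'] := eqVneq y (a i.+1); first exact: continuous_eq0_left (cf _) ai f0_piece.
by apply: f0_piece; rewrite !lt_neqAle aiy' yai' aiy yai.
Qed.

Lemma flat_spline_flat_knots m n f a i : flat_spline m.+1 n f a -> (i < n)%N ->
  (forall y, a i <= y <= a i.+1 -> f y = 0) ->
  forall j, (j < m.+1)%N -> derive1n j f (a i) = 0 /\ derive1n j f (a i.+1) = 0.
Proof.
move=> fs ilt f0 j jm.
apply: derive1n_eq0_itvoo_ends (fs_incr fs (ltnSn i) ilt) _ (fs_continuous fs jm).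
by move=> y /andP[? ?]; apply: f0; rewrite !ltW.
Qed.


Lemma flat_spline1_not_separated n f a i u v : flat_spline 1 n f a -> (i < n)%N ->
  a i <= u -> u < v -> v <= a i.+1 -> f u = 0 -> f v = 0 -> ~ f_separated f u v.
Proof.
move=> fs ilt aiu uv vai fu fv /f_separated_nonzero nz.
have in_piece t : u < t < v -> a i < t < a i.+1.
  by move=> /andP[? ?]; apply/andP; split; lra.
have cf : continuous f := fs_continuous fs (ltn0Sn 0).
have df t : u < t < v -> derivable f t 1.
  by move=> /in_piece/(fs_piece fs ilt)[dt _]; exact: (dt 0%N).
have [t [/andP[ut tv] ft df't]] :=
  rolle_extremum uv (continuous_subspaceT cf) df fu fv nz.
have df'0 x : u < x < t -> derive1 f x = 0.
  move=> /andP[ux xt]; rewrite -df't.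
  have [xi ti] : a i < x < a i.+1 /\ a i < t < a i.+1.
    by split; apply: in_piece; apply/andP; split; lra.
  apply: (@derive1_eq0_cst_itvoo _ (derive1 f) (a i) (a i.+1)); rewrite ?in_itvooE //.
  by move=> y /(fs_piece fs ilt)[dy d2]; split; [exact: (dy 1%N)|exact: d2].
suff ftu : f t = f u by move: ft; rewrite ftu fu eqxx.
apply: derive1_eq0_cst (ltW ut) (continuous_subspaceT cf) _ => x /andP[ux xt].
by split; [apply: df|apply: df'0]; apply/andP; split; lra.
Qed.

Lemma flat_spline1_next_zero n f a k x y l : flat_spline 1 n f a -> (k < n)%N ->
  a k <= x -> sep_zero_family f `[a 0%N, a n] [:: x, y & l] ->
  a k.+1 < y /\ (k.+1 < n)%N.
Proof.
move=> fs kn akx /sep_zero_family_cons2[[_ fx] sxy yfam].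
have [+ fy] := sep_zero_family_mem yfam (mem_head _ _).
rewrite /= in_itv /= => /andP[_ yan].
have aky : a k.+1 < y.
  rewrite ltNge; apply/negP => yak.
  exact: flat_spline1_not_separated fs kn akx sxy.1 yak fx fy sxy.
split=> //; rewrite ltn_neqAle kn andbT; apply/eqP => k1n.
by move: (lt_le_trans aky yan); rewrite k1n ltxx.
Qed.

Lemma flat_spline1_sep_zeros n f a k x y l : flat_spline 1 n f a -> (k < n)%N ->
  a k <= x -> sep_zero_family f `[a 0%N, a n] [:: x, y & l] -> (size l + k.+2 <= n)%N.
Proof.
move=> fs; elim: l k x y => [|w l IH] k x y kn akx fam;
  have [aky k1n] := flat_spline1_next_zero fs kn akx fam => //.
have [_ _ yfam] := (sep_zero_family_cons2 _ _ _ _ _).1 fam.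
by have := IH k.+1 y w k1n (ltW aky) yfam; rewrite /=; lia.
Qed.

Lemma flat_spline_rolle m n f a u x y : flat_spline m.+2 n f a -> u <= x ->
  derive1 f u = 0 -> f x = 0 -> f y = 0 -> f_separated f x y ->
  exists t, [/\ x < t < y, f t != 0, derive1 f t = 0 & f_separated (derive1 f) u t].
Proof.
move=> fs ux df'u fx fy sxy.
have cf : continuous f := fs_continuous fs (isT : (0 < m.+2)%N).
have df : forall x, derivable f x 1 := fs_derivable fs (isT : (1 < m.+2)%N).
have [t [/andP[xt ty] ft df't]] := rolle_extremum sxy.1 (continuous_subspaceT cf)
  (fun s _ => df s) fx fy (f_separated_nonzero sxy).
exists t; split; rewrite ?xt ?ty //.
by apply: (f_separated_derive1 df _ df'u _ _ fx ft); rewrite ?ux ?lexx ?ltW //; lra.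
Qed.

(* The family built for f' ends with a_n, a zero of f' since m.+2 >= 2. *)
Lemma flat_spline_derive1_sep_zeros m n f a u x y l : flat_spline m.+2 n f a ->
  a 0%N <= u <= x -> derive1 f u = 0 ->
  sep_zero_family f `[a 0%N, a n] [:: x, y & l] ->
  exists w, sep_zero_family (derive1 f) `[a 0%N, a n] (u :: w) /\ size w = (size l).+2.
Proof.
move=> fs; elim: l u x y => [|w l IH] u x y /andP[a0u ux] df'u fam.
all: have [[xI fx] sxy yfam] := (sep_zero_family_cons2 _ _ _ _ _).1 fam.
all: have [yI fy] := sep_zero_family_mem yfam (mem_head _ _).
all: have [t [/andP[xt ty] ft df't sut]] := flat_spline_rolle fs ux df'u fx fy sxy.
all: move: xI yI; rewrite /= !in_itv /= => /andP[_ xan] /andP[_ yan].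
all: have uI : `[a 0%N, a n] u by rewrite /= in_itv /= a0u; lra.
  have df : forall x, derivable f x 1 := fs_derivable fs (isT : (1 < m.+2)%N).
  have tan : t < a n by lra.
  exists [:: t; a n]; split => //.
  apply/sep_zero_family_cons2; split => //; apply/sep_zero_family_cons2; split.
  - by split => //; rewrite /= in_itv /=; apply/andP; split; lra.
  - by apply: (f_separated_derive1 df tan df't _ _ fy ft); apply/andP; split; lra.
  apply/sep_zero_familyP; split => // v; rewrite inE => /eqP ->.
  split; first by rewrite /= in_itv /= lexx; lra.
  exact: (fs_ends fs (isT : (1 < m.+2)%N)).2.
have tI : a 0%N <= t <= y by apply/andP; split; lra.
have [w' [fam' sw']] := IH t y w tI df't yfam.
exists (t :: w'); split; last by rewrite /= sw'.
by apply/sep_zero_family_cons2.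
Qed.

Lemma flat_spline_sep_zeros m n f a w : flat_spline m.+1 n f a ->
  sep_zero_family f `[a 0%N, a n] w -> (1 < size w)%N -> (size w + m.+1 <= n.+1)%N.
Proof.
elim: m f w => [|m IH] f [|x [|y l]] // fs wfam _.
all: have [+ _] := sep_zero_family_mem wfam (mem_head _ _).
all: rewrite /= in_itv /= => /andP[a0x _].
  by have := flat_spline1_sep_zeros fs (fs_n_gt0 fs) a0x wfam; rewrite /=; lia.
have a0a0x : a 0%N <= a 0%N <= x by rewrite lexx a0x.
have [w [wfam' sw]] :=
  flat_spline_derive1_sep_zeros fs a0a0x (fs_ends fs (isT : (1 < m.+2)%N)).1 wfam.
by have := IH _ _ (flat_spline_derive1 fs) wfam'; rewrite /= sw; lia.
Qed.


Lemma flat_spline_sep_first_knot m n f a x : flat_spline m.+1 n f a ->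
  ~ (forall y, a 0%N <= y <= a 1%N -> f y = 0) -> a 0%N < x -> f_separated f (a 0%N) x.
Proof.
move=> fs nflat a0x; apply: contrapT => nsep; apply: nflat.
have a0I : a 0%N <= a 0%N <= x by rewrite lexx ltW.
have f0 := not_f_separated_eq0 a0x nsep a0I (fs_ends fs (ltn0Sn m)).1.
have f0' c : c <= x -> forall y, a 0%N < y < c -> f y = 0.
  by move=> cx y /andP[? ?]; apply: f0; apply/andP; split; lra.
have n0 := fs_n_gt0 fs; have a01 := fs_incr fs (ltn0Sn 0) n0.
have [xa1|a1x] := leP x (a 1%N).
  exact: flat_spline_flat_piece fs n0 (lexx _) a0x xa1 (f0' x (lexx _)).
exact: flat_spline_flat_piece fs n0 (lexx _) a01 (lexx _) (f0' _ (ltW a1x)).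
Qed.

Lemma flat_spline_sep_last_knot m n f a x : flat_spline m.+1 n.+1 f a ->
  ~ (forall y, a n <= y <= a n.+1 -> f y = 0) -> x < a n.+1 -> f_separated f x (a n.+1).
Proof.
move=> fs nflat xan; apply: contrapT => nsep; apply: nflat.
have anI : x <= a n.+1 <= a n.+1 by rewrite lexx ltW.
have f0 := not_f_separated_eq0 xan nsep anI (fs_ends fs (ltn0Sn m)).2.
have f0' c : x <= c -> forall y, c < y < a n.+1 -> f y = 0.
  by move=> xc y /andP[? ?]; apply: f0; apply/andP; split; lra.
have ann := fs_incr fs (ltnSn n) (leqnn _).
have [anx|xan'] := leP (a n) x.
  exact: flat_spline_flat_piece fs (ltnSn n) anx xan (lexx _) (f0' x (lexx _)).
exact: flat_spline_flat_piece fs (ltnSn n) (lexx _) ann (lexx _) (f0' _ (ltW xan')).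
Qed.

Lemma flat_spline_interior_nonflat m n f a z : flat_spline m.+1 n.+1 f a ->
  f_separated f (a 0%N) (a n.+1) -> sep_zero_family f `]a 0%N, a n.+1[ z ->
  ~ (forall y, a 0%N <= y <= a 1%N -> f y = 0) ->
  ~ (forall y, a n <= y <= a n.+1 -> f y = 0) -> (size z + m.+1 < n.+1)%N.
Proof.
move=> fs sep0n zfam nflatl nflatr; have [fa0 fan] := fs_ends fs (ltn0Sn m).
have ext : sep_zero_family f `[a 0%N, a n.+1] (a 0%N :: rcons z (a n.+1)).
  apply: (sep_zero_family_extend zfam fa0 fan sep0n) => x.
  move=> /(sep_zero_family_mem zfam)[+ _]; rewrite /= in_itv /= => /andP[a0x xan].
  split; first exact: flat_spline_sep_first_knot fs nflatl a0x.
  exact: flat_spline_sep_last_knot fs nflatr xan.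
have two : (1 < size (a 0%N :: rcons z (a n.+1)))%N by rewrite /= size_rcons.
by have := flat_spline_sep_zeros fs ext two; rewrite /= size_rcons; lia.
Qed.

Lemma flat_spline_reduce_first m n f a z : flat_spline m.+1 n.+2 f a ->
  f_separated f (a 0%N) (a n.+2) -> sep_zero_family f `]a 0%N, a n.+2[ z ->
  (forall y, a 0%N <= y <= a 1%N -> f y = 0) ->
  [/\ flat_spline m.+1 n.+1 f (fun i => a i.+1), f_separated f (a 1%N) (a n.+2)
    & exists2 z', sep_zero_family f `]a 1%N, a n.+2[ z' & (size z <= (size z').+1)%N].
Proof.
move=> fs sep0n zfam flat.
have a01 := fs_incr fs (ltn0Sn 0) (isT : (1 <= n.+2)%N).
have a1n := fs_incr fs (isT : (1 < n.+2)%N) (leqnn _).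
split.
- apply: (flat_spline_shift fs) => j jm.
  exact: (flat_spline_flat_knots fs (ltn0Sn _) flat jm).2.
- exact: f_separated_shrinkl sep0n (ltW a01) a1n flat.
exists [seq x <- z | a 1%N < x].
  apply: (sep_zero_family_filter zfam) => x /(sep_zero_family_mem zfam)[+ _].
  by rewrite /= !in_itv /= => /andP[_ ->] ->.
have : (count (predC (fun x => (a 1%N < x)%R)) z <= 1)%N.
  apply: (sep_zero_family_count_flat zfam flat) => x /(sep_zero_family_mem zfam)[+ _].
  by rewrite /= in_itv /= -leNgt => /andP[a0x _] ->; rewrite ltW.
by rewrite size_filter -(count_predC (fun x => a 1%N < x) z) -(addn1 (count _ z)) leq_add2l.
Qed.

Lemma flat_spline_reduce_last m n f a z : flat_spline m.+1 n.+2 f a ->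
  f_separated f (a 0%N) (a n.+2) -> sep_zero_family f `]a 0%N, a n.+2[ z ->
  (forall y, a n.+1 <= y <= a n.+2 -> f y = 0) ->
  [/\ flat_spline m.+1 n.+1 f a, f_separated f (a 0%N) (a n.+1)
    & exists2 z', sep_zero_family f `]a 0%N, a n.+1[ z' & (size z <= (size z').+1)%N].
Proof.
move=> fs sep0n zfam flat.
have a0n := fs_incr fs (ltn0Sn n) (leqnSn _).
have ann := fs_incr fs (ltnSn n.+1) (leqnn _).
split.
- apply: (flat_spline_drop fs) => j jm.
  exact: (flat_spline_flat_knots fs (ltnSn _) flat jm).1.
- exact: f_separated_shrinkr sep0n a0n (ltW ann) flat.
exists [seq x <- z | x < a n.+1].
  apply: (sep_zero_family_filter zfam) => x /(sep_zero_family_mem zfam)[+ _].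
  by rewrite /= !in_itv /= => /andP[-> _] ->.
have : (count (predC (fun x => (x < a n.+1)%R)) z <= 1)%N.
  apply: (sep_zero_family_count_flat zfam flat) => x /(sep_zero_family_mem zfam)[+ _].
  by rewrite /= in_itv /= -leNgt => /andP[_ xan] ->; rewrite ltW.
by rewrite size_filter -(count_predC (fun x => x < a n.+1) z) -(addn1 (count _ z)) leq_add2l.
Qed.

Lemma flat_spline_interior_sep_zeros m n f a z : flat_spline m.+1 n f a ->
  f_separated f (a 0%N) (a n) -> sep_zero_family f `]a 0%N, a n[ z ->
  (size z + m.+1 < n)%N.
Proof.
elim: n f a z => [|n IH] f a z fs sep0n zfam; first by have := fs_n_gt0 fs.
have [flatl|nflatl] := pselect (forall y, a 0%N <= y <= a 1%N -> f y = 0).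
  case: n IH fs sep0n zfam => [|n] IH fs sep0n zfam.
    by case: (f_separated_not_eq0 sep0n flatl).
  have [fs' sep' [z' zfam' zz']] := flat_spline_reduce_first fs sep0n zfam flatl.
  by have := IH _ _ _ fs' sep' zfam'; lia.
have [flatr|nflatr] := pselect (forall y, a n <= y <= a n.+1 -> f y = 0).
  case: n IH fs sep0n zfam nflatl flatr => [|n] IH fs sep0n zfam _ flatr.
    by case: (f_separated_not_eq0 sep0n flatr).
  have [fs' sep' [z' zfam' zz']] := flat_spline_reduce_last fs sep0n zfam flatr.
  by have := IH _ _ _ fs' sep' zfam'; lia.
exact: flat_spline_interior_nonflat fs sep0n zfam nflatl nflatr.
Qed.

End FlatSplines.

Section SplineLocalProperties.
Variable R : realType.
Implicit Types (s : R -> R) (xs : seq R) (y : R).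

Lemma piece_cover xs y : (exists2 i, (i <= size xs)%N & piece xs i y) \/
  (exists2 j, (j < size xs)%N & y = nth 0 xs j).
Proof.
elim: xs => [|x xs IH]; first by left; exists 0%N => //; split.
case: (ltgtP y x) => [yx|xy|->]; last by right; exists 0%N.
  by left; exists 0%N => //; split => //=; rewrite yx orbT.
case: IH => [[i il [yi1 yi2]]|[j jl ->]]; last by right; exists j.+1.
left; exists i.+1 => //; split => //=.
by case: i {il} yi1 yi2 => [|i] //= _ _; rewrite xy orbT.
Qed.

Lemma poly_on_piece_derive1n_eq0 m s xs i y :
  poly_on m s (piece xs i) -> piece xs i y -> derive1n m.+1 s y = 0.
Proof.
move=> [P [sizeP sP]] [yi1 yi2].
pose a := if i == 0%N then y - 1 else nth 0 xs i.-1.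
pose b := if i == size xs then y + 1 else nth 0 xs i.
have ab_piece x : x \in `]a, b[%R -> piece xs i x.
  rewrite in_itvooE /a /b => /andP[ax xb]; split.
    by move: ax; case: eqP => //= _ ->; rewrite orbT.
  by move: xb; case: eqP => //= _ ->; rewrite orbT.
have yab : y \in `]a, b[%R.
  rewrite in_itvooE /a /b; apply/andP; split.
    by case: eqVneq yi1 => [_ _|_ /= yi1]; [lra|exact: yi1].
  by case: eqVneq yi2 => [_ _|_ /= yi2]; [lra|exact: yi2].
rewrite (@derive1n_eq_itvoo _ s (horner P) a b m.+1) //; last by move=> x /ab_piece /sP.
by rewrite derive1n_horner derivn_poly0 ?horner0.
Qed.

(* At a breakpoint where s is smooth, s^(m+1) is continuous and vanishes on the
   piece to its right. *)
Lemma poly_pieces_derive1n_eq0 m s xs y : sorted <%R xs ->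
  (forall i, (i <= size xs)%N -> poly_on m s (piece xs i)) ->
  (exists e : R, 0 < e /\ smooth_on s (ball y e)) -> derive1n m.+1 s y = 0.
Proof.
move=> sorted_xs spoly [e [e_gt0 smooth]].
case: (piece_cover xs y) => [[i il yi]|[j jl yj]].
  exact: poly_on_piece_derive1n_eq0 (spoly i il) yi.
pose b := if j.+1 == size xs then y + 1 else nth 0 xs j.+1.
have yb : y < b.
  rewrite /b; case: eqP => [_|jn]; first lra.
  have jl' : (j.+1 < size xs)%N by rewrite ltn_neqAle jl andbT; apply/eqP.
  by rewrite yj; apply: (sorted_ltn_nth lt_trans 0 sorted_xs).
apply: (continuous_eq0_right _ yb).
  by apply: derivable1_continuous; apply: smooth; exact: ballxx.
move=> x /andP[yx xb]; apply: (@poly_on_piece_derive1n_eq0 _ _ _ j.+1); first exact: spoly.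
split; first by rewrite /= -yj yx.
by move: xb; rewrite /b /=; case: eqVneq => [_ _|_ xb] //=; rewrite xb orbT.
Qed.

Lemma spline_flat_spline m n s (alpha : nat -> R) : (0 < n)%N -> is_spline m.+1 s ->
  (forall i j, (i < j)%N -> (j <= n)%N -> alpha i < alpha j) ->
  (forall x, is_knot s x -> exists2 i, (i <= n)%N & x = alpha i) ->
  (forall j, (j < m.+1)%N -> derive1n j s (alpha 0%N) = 0 /\ derive1n j s (alpha n) = 0) ->
  flat_spline m.+1 n s alpha.
Proof.
move=> n_gt0 [[der cont] [xs [sorted_xs spoly]]] incr knots ends; split => //.
  move=> j jm; have [jm'|jm'] := ltnP j m.
    exact: (fun x => derivable1_continuous (der j jm' x)).
  by have -> : j = m by apply/eqP; rewrite eqn_leq jm' -ltnS jm.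
have mono k l : (k <= l)%N -> (l <= n)%N -> alpha k <= alpha l.
  by rewrite leq_eqVlt => /orP[/eqP->|kl] ln; [exact: lexx|exact/ltW/incr].
move=> i ilt y /andP[y1 y2].
have [e [e_gt0 smooth]] : exists e : R, 0 < e /\ smooth_on s (ball y e).
  apply: contrapT => /knots[j jn yj].
  have [ji|ij] := leqP j i.
    by move: y1; rewrite yj ltNge mono ?(ltnW ilt).
  by move: y2; rewrite yj ltNge mono.
split; first by move=> k; apply: smooth; exact: ballxx.
by apply: poly_pieces_derive1n_eq0 sorted_xs spoly _; exists e.
Qed.

End SplineLocalProperties.

Unset Implicit Arguments.
Set Strict Implicit.

Theorem mainTheorem2 (R : realType) (m n : nat) (s : R -> R) (alpha : nat -> R) :
  (0 < m)%N -> (0 < n)%N ->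
  is_spline m s ->
  (forall i j, (i < j)%N -> (j <= n)%N -> alpha i < alpha j) ->
  (forall x, is_knot s x <-> exists2 i, (i <= n)%N & x = alpha i) ->
  f_separated s (alpha 0%N) (alpha n) ->
  (forall j, (j < m)%N -> derive1n j s (alpha 0%N) = 0 /\ derive1n j s (alpha n) = 0) ->
  (m.+1 <= n)%N /\ at_most_sep_zeros s (n - m - 1) `]alpha 0%N, alpha n[.
Proof.
case: m => [//|m] _ n_gt0 spline incr knots sep ends.
have fs := spline_flat_spline n_gt0 spline incr (fun x => (knots x).1) ends.
have no_zeros : sep_zero_family s `]alpha 0%N, alpha n[ [::] by [].
split; first by have := flat_spline_interior_sep_zeros fs sep no_zeros.
by move=> z zfam; have := flat_spline_interior_sep_zeros fs sep zfam; lia.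
Qed.
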